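(* For every $g\ge 1$, the number of perfect matchings of $\mathcal{H}_g$ is $\psi(\mathcal{H}_g)=2^{\frac{1}{9}\cdot 4^g+\frac{2}{3}g-\frac{1}{9}}$, and the entropy for perfect matchings satisfies $$\lim_{g\to\infty}\frac{\ln \psi(\mathcal{H}_g)}{N_g/2}=\frac{\ln 2}{3},$$ where $N_g=\frac{2}{3}(4^g+2)$ is the number of vertices of $\mathcal{H}_g$.
   Context: $\mathcal{H}_1$ is the 4-cycle. For $g>1$, $\mathcal{H}_g$ is obtained from $\mathcal{H}_{g-1}$ as follows: every edge $\{u,v\}$ of $\mathcal{H}_{g-1}$ is kept, and two new vertices $w,w'$ are added together with the edges $\{u,w\},\{w,w'\},\{w',v\}$ (so $u,v,w',w$ form a quadrangle containing the edge $\{u,v\}$). $\psi(G)$ denotes the number of perfect matchings of a graph $G$. *)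

From HB Require Import structures.
From mathcomp Require Import all_boot all_order all_algebra.
From mathcomp Require Import all_classical all_reals all_analysis.

Set Implicit Arguments.
Unset Strict Implicit.
Unset Printing Implicit Defensive.

(* A finite (multi)graph: vertices are 0 .. nv-1, edges listed as pairs. *)
Record graph := Graph { nv : nat; edges : seq (nat * nat) }.

Definition C4 : graph := Graph 4 [:: (0, 1); (1, 2); (2, 3); (3, 0)].

(* One step H_{g-1} -> H_g: edge number i, {u,v}, is kept, and two new
   vertices w = nv + 2i, w' = nv + 2i + 1 are added with edges
   {u,w}, {w,w'}, {w',v}. *)
Definition quad_edges (n : nat) (ei : (nat * nat) * nat) : seq (nat * nat) :=
  let: ((u, v), i) := ei in
  let w := n + 2 * i in
  let w' := n + 2 * i + 1 in
  [:: (u, v); (u, w); (w, w'); (w', v)].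

Definition Hstep (G : graph) : graph :=
  Graph (nv G + 2 * size (edges G))
        (flatten (map (quad_edges (nv G))
                      (zip (edges G) (iota 0 (size (edges G)))))).

(* H g = H_g for g >= 1 (H 0 is also set to the 4-cycle; irrelevant). *)
Definition H (g : nat) : graph := iter g.-1 Hstep C4.

Definition incident (v : nat) (e : nat * nat) : bool := (e.1 == v) || (e.2 == v).

Definition perfect_matching (G : graph) (M : {set 'I_(size (edges G))}) : bool :=
  [forall v : 'I_(nv G),
     #|[set i in M | incident v (nth (0, 0) (edges G) i)]| == 1].

Definition psi (G : graph) : nat :=
  #|[set M : {set 'I_(size (edges G))} | perfect_matching M]|.

From HB Require Import structures.
From mathcomp Require Import all_boot all_order all_algebra.
From mathcomp Require Import all_classical all_reals all_analysis.
From mathcomp Require Import zify ring lra.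

(* In [Hstep G] every edge uv of G becomes a quadrangle u v w' w.  A perfect
   matching of [Hstep G] meets each quadrangle in one of three ways: {uv, ww'},
   {uw, w'v}, or {ww'} alone.  The quadrangles of the first two kinds form a
   perfect matching M of G, and for each edge of M the choice between the two
   kinds is free, so psi (Hstep G) = psi G * 2 ^ (nv G / 2).  Starting from
   psi H_1 = 2 with nv H_g = 2 (4^g + 2) / 3, this gives psi H_g = 2 ^ s with
   9 s = 4^g + 6 g - 1, and the entropy ratio equals
   ln 2 / 3 * (1 + (6 g - 3) / (4^g + 2)). *)

Set Implicit Arguments.
Unset Strict Implicit.
Unset Printing Implicit Defensive.

Lemma big_nat_delta (F : nat -> nat) i0 n : i0 < n ->
  \sum_(0 <= i < n) (if i == i0 then F i else 0) = F i0.
Proof. by move=> lt_i0n; rewrite -big_mkcond big_nat1_eq lt_i0n. Qed.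

Lemma leq_big_nat_term (F : nat -> nat) i n : i < n -> F i <= \sum_(0 <= j < n) F j.
Proof.
move=> lt_in; rewrite -{1}(big_nat_delta F lt_in); apply: leq_sum => j _.
by case: eqP.
Qed.

Lemma big_nat_blocks4 (F : nat -> nat) n :
  \sum_(0 <= j < 4 * n) F j =
  \sum_(0 <= i < n) (F (4 * i) + F (4 * i + 1) + F (4 * i + 2) + F (4 * i + 3)).
Proof.
rewrite mulnC big_nat_mul; apply: eq_bigr => i _.
rewrite mulSn addnC 4?big_ltn ?big_geq; try lia.
by rewrite /= addn0 !addnA mulnC addn1 addn2 addn3.
Qed.

(* Sets of edge indices are handled as predicates on [nat]; [memn M j] is
   [false] for [j >= N]. *)
Definition memn (N : nat) (M : {set 'I_N}) (j : nat) : bool :=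
  if insub j is Some x then x \in M else false.

Section Memn.
Variable N : nat.
Implicit Types (A B M : {set 'I_N}) (j : nat).

Lemma memnE M (x : 'I_N) : memn M x = (x \in M).
Proof. by rewrite /memn valK. Qed.

Lemma memn_set (P : pred nat) j : memn [set x : 'I_N | P x] j = (j < N) && P j.
Proof. by rewrite /memn; case: insubP => [x -> <- | /negbTE ->] //; rewrite inE. Qed.

Lemma memnU A B j : memn (A :|: B) j = memn A j || memn B j.
Proof. by rewrite /memn; case: insubP => // x _ _; rewrite inE. Qed.

Lemma memnD A B j : memn (A :\: B) j = memn A j && ~~ memn B j.
Proof. by rewrite /memn; case: insubP => // x _ _; rewrite inE andbC. Qed.

Lemma memn_subset A B j : A \subset B -> memn A j -> memn B j.
Proof. by move=> sAB; rewrite /memn; case: insubP => // x _ _; apply: (fintype.subsetP sAB). Qed.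

Lemma memn_inj A B : (forall j, j < N -> memn A j = memn B j) -> A = B.
Proof. by move=> eqAB; apply/setP => x; rewrite -!memnE eqAB. Qed.

Lemma card_memn_cond M (P : pred nat) :
  #|[set x in M | P x]| = \sum_(0 <= j < N) (memn M j && P j).
Proof.
rewrite big_mkord -sum1_card big_mkcond /=; apply: eq_bigr => x _.
by rewrite inE memnE; case: (_ && _).
Qed.

Lemma card_memn M : #|M| = \sum_(0 <= j < N) memn M j.
Proof.
rewrite big_mkord -sum1_card big_mkcond /=; apply: eq_bigr => x _.
by rewrite memnE; case: (_ \in _).
Qed.

End Memn.

Definition deg (G : graph) (c : nat -> bool) (v : nat) : nat :=
  \sum_(0 <= j < size (edges G)) (c j && incident v (nth (0, 0) (edges G) j)).

Definition perfect (G : graph) (c : nat -> bool) : Prop :=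
  forall v, v < nv G -> deg G c v = 1.

Lemma perfect_matchingP G (M : {set 'I_(size (edges G))}) :
  perfect_matching M <-> perfect G (memn M).
Proof.
have degE v : #|[set j in M | incident v (nth (0, 0) (edges G) j)]| = deg G (memn M) v.
  exact: (card_memn_cond M (fun j => incident v (nth (0, 0) (edges G) j))).
split=> [/forallP pm v lt_v | pm]; last by apply/forallP => v; rewrite degE pm.
by have := pm (Ordinal lt_v); rewrite degE => /eqP.
Qed.

Lemma eq_perfect G c1 c2 :
  (forall j, j < size (edges G) -> c1 j = c2 j) -> perfect G c1 -> perfect G c2.
Proof.
move=> eq_c pm1 v lt_v; rewrite -(pm1 v lt_v).
by apply: eq_big_nat => j /andP[_ lt_j]; rewrite eq_c.
Qed.

Definition wf_graph (G : graph) : bool :=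
  all (fun e : nat * nat => [&& e.1 < nv G, e.2 < nv G & e.1 != e.2]) (edges G).

Lemma wf_graph_nth G i : wf_graph G -> i < size (edges G) ->
  let e := nth (0, 0) (edges G) i in [/\ e.1 < nv G, e.2 < nv G & e.1 != e.2].
Proof. by move=> /all_nthP wfG lt_i; have /and3P[] := wfG (0, 0) i lt_i. Qed.

Lemma handshake_perfect G c : wf_graph G -> perfect G c ->
  2 * \sum_(0 <= j < size (edges G)) c j = nv G.
Proof.
move=> wfG pm; have -> : nv G = \sum_(0 <= v < nv G) deg G c v.
  rewrite (eq_big_nat _ _ (F2 := fun _ => 1)) => [|v /andP[_ lt_v]]; last exact: pm.
  by rewrite sum_nat_const_nat subn0 muln1.
rewrite /deg exchange_big big_distrr /=; apply: eq_big_nat => j /andP[_ lt_j].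
have [] := wf_graph_nth wfG lt_j; case: nth => a b /= lt_a lt_b /negPf neq_ab.
rewrite (eq_big_nat _ _ (F2 := fun v => (if v == a then c j : nat else 0) +
                                       (if v == b then c j : nat else 0))).
  by rewrite big_split /= !big_nat_delta // addnn mul2n.
move=> v _; rewrite /incident /= ![_ == v]eq_sym.
by case: (c j); case: (v =P a) => [->|]; rewrite ?neq_ab //; case: eqP.
Qed.

Lemma size_flatten_quad_edges n (es : seq (nat * nat)) s :
  size (flatten (map (quad_edges n) (zip es (iota s (size es))))) = 4 * size es.
Proof. by elim: es s => [|[u v] es IHes] s //=; rewrite IHes mulnS. Qed.

Lemma nth_flatten_quad_edges n (es : seq (nat * nat)) s i k :
  i < size es -> k < 4 ->
  nth (0, 0) (flatten (map (quad_edges n) (zip es (iota s (size es))))) (4 * i + k) =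
  nth (0, 0) (quad_edges n (nth (0, 0) es i, s + i)) k.
Proof.
move=> + lt_k; elim: es s i => [|[u v] es IHes] s [|i] // lt_i.
  by rewrite addn0; case: k lt_k IHes => [|[|[|[|k]]]].
have -> : 4 * i.+1 + k = (4 * i + k).+4 by lia.
by rewrite /= IHes // addSnnS.
Qed.

Lemma block4P j n : j < 4 * n -> exists i k, [/\ i < n, k < 4 & j = 4 * i + k].
Proof. by move=> lt_j; exists (j %/ 4), (j %% 4); split; lia. Qed.

(* Encoding of a matching of [Hstep G] by two edge predicates of [G]: [a] marks
   the quadrangles using their original edge, [b] those using their two side
   edges; every other quadrangle uses its middle edge. *)
Definition quad_lift (a b : nat -> bool) (j : nat) : bool :=
  match j %% 4 with 0 => a (j %/ 4) | 2 => ~~ b (j %/ 4) | _ => b (j %/ 4) end.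

Lemma quad_liftE a b i k : k < 4 ->
  quad_lift a b (4 * i + k) = nth false [:: a i; b i; ~~ b i; b i] k.
Proof.
move=> lt_k; rewrite /quad_lift.
have -> : (4 * i + k) %/ 4 = i by lia.
have -> : (4 * i + k) %% 4 = k by lia.
by case: k lt_k => [|[|[|[|]]]].
Qed.

Section Subdivision.

Variable G : graph.
Hypothesis wfG : wf_graph G.

Local Notation m := (size (edges G)).
Local Notation e i := (nth (0, 0) (edges G) i).

Lemma size_Hstep : size (edges (Hstep G)) = 4 * m.
Proof. exact: size_flatten_quad_edges. Qed.

Lemma nth_Hstep i k : i < m -> k < 4 ->
  nth (0, 0) (edges (Hstep G)) (4 * i + k) =
  nth (0, 0) [:: e i; ((e i).1, nv G + 2 * i); (nv G + 2 * i, nv G + 2 * i + 1);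
                 (nv G + 2 * i + 1, (e i).2)] k.
Proof. by move=> lt_i lt_k; rewrite nth_flatten_quad_edges //; case: (e i). Qed.

Lemma wf_Hstep : wf_graph (Hstep G).
Proof.
apply/(all_nthP (0, 0)) => j; rewrite size_Hstep => /block4P[i [k [lt_i lt_k ->]]].
rewrite nth_Hstep //; have [] := wf_graph_nth wfG lt_i.
by case: k lt_k => [|[|[|[|k]]]] //= _ *; apply/and3P; split=> //; apply/eqP; lia.
Qed.

Lemma deg_Hstep c v : deg (Hstep G) c v =
  \sum_(0 <= i < m)
    ((c (4 * i) && incident v (e i)) +
     (c (4 * i + 1) && incident v ((e i).1, nv G + 2 * i)) +
     (c (4 * i + 2) && incident v (nv G + 2 * i, nv G + 2 * i + 1)) +
     (c (4 * i + 3) && incident v (nv G + 2 * i + 1, (e i).2))).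
Proof.
rewrite /deg size_Hstep big_nat_blocks4; apply: eq_big_nat => i /andP[_ lt_i].
have := nth_Hstep (k := 0) lt_i isT; rewrite addn0 => ->.
by rewrite !nth_Hstep.
Qed.

Lemma deg_Hstep_old c v : v < nv G -> deg (Hstep G) c v =
  \sum_(0 <= i < m)
    ((c (4 * i) && incident v (e i)) + (c (4 * i + 1) && ((e i).1 == v)) +
     (c (4 * i + 3) && ((e i).2 == v))).
Proof.
move=> lt_v; rewrite deg_Hstep; apply: eq_big_nat => i _; rewrite /incident /=.
have [/negPf-> /negPf->] : nv G + 2 * i != v /\ nv G + 2 * i + 1 != v.
  by split; apply/eqP; lia.
by rewrite orbF andbF addn0.
Qed.

Lemma deg_Hstep_new c i : i < m ->
  deg (Hstep G) c (nv G + 2 * i) = c (4 * i + 1) + c (4 * i + 2).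
Proof.
move=> lt_i; rewrite deg_Hstep.
rewrite -(big_nat_delta (fun i => c (4 * i + 1) + c (4 * i + 2)) lt_i).
apply: eq_big_nat => j /andP[_ lt_j]; have [lt_a lt_b _] := wf_graph_nth wfG lt_j.
rewrite /incident /=.
have [/negPf-> /negPf-> /negPf->] :
    [/\ (e j).1 != nv G + 2 * i, (e j).2 != nv G + 2 * i & nv G + 2 * j + 1 != nv G + 2 * i].
  by split; apply/eqP; lia.
rewrite eqn_add2l eqn_mul2l /= !orbF !andbF.
by case: eqP => [->|_]; rewrite ?andbT ?andbF /= ?addn0.
Qed.

Lemma deg_Hstep_new' c i : i < m ->
  deg (Hstep G) c (nv G + 2 * i + 1) = c (4 * i + 2) + c (4 * i + 3).
Proof.
move=> lt_i; rewrite deg_Hstep.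
rewrite -(big_nat_delta (fun i => c (4 * i + 2) + c (4 * i + 3)) lt_i).
apply: eq_big_nat => j /andP[_ lt_j]; have [lt_a lt_b _] := wf_graph_nth wfG lt_j.
rewrite /incident /=.
have [/negPf-> /negPf-> /negPf->] :
    [/\ (e j).1 != nv G + 2 * i + 1, (e j).2 != nv G + 2 * i + 1
       & nv G + 2 * j != nv G + 2 * i + 1].
  by split; apply/eqP; lia.
rewrite eqn_add2r eqn_add2l eqn_mul2l /= !orbF !andbF.
by case: eqP => [->|_]; rewrite ?andbT ?andbF /= ?addn0.
Qed.

Lemma perfect_Hstep_split c : perfect (Hstep G) c <->
  (forall v, v < nv G -> deg (Hstep G) c v = 1) /\
  (forall i, i < m ->
     deg (Hstep G) c (nv G + 2 * i) = 1 /\ deg (Hstep G) c (nv G + 2 * i + 1) = 1).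
Proof.
rewrite /perfect /=; split=> [pm | [pm_old pm_new] v lt_v].
  by split=> [v lt_v | i lt_i]; [|split]; apply: pm; lia.
have [lt_vn | ge_vn] := ltnP v (nv G); first exact: pm_old.
have lt_i : (v - nv G) %/ 2 < m by lia.
have [->|->] : v = nv G + 2 * ((v - nv G) %/ 2) \/ v = nv G + 2 * ((v - nv G) %/ 2) + 1.
  by lia.
all: by have [] := pm_new _ lt_i.
Qed.

Lemma deg_Hstep_newP c i : i < m ->
  deg (Hstep G) c (nv G + 2 * i) = 1 /\ deg (Hstep G) c (nv G + 2 * i + 1) = 1 <->
  c (4 * i + 2) = ~~ c (4 * i + 1) /\ c (4 * i + 3) = c (4 * i + 1).
Proof.
move=> lt_i; rewrite deg_Hstep_new // deg_Hstep_new' //.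
by case: (c (4 * i + 1)) (c (4 * i + 2)) (c (4 * i + 3)) => [] [] []; split=> -[].
Qed.

Lemma deg_Hstep_old_disjoint c i :
  (forall v, v < nv G -> deg (Hstep G) c v = 1) -> i < m -> ~~ (c (4 * i) && c (4 * i + 1)).
Proof.
move=> pm_old lt_i; apply/negP => /andP[c0 c1].
(* (e i).1 would be covered by both the kept edge and the side edge of quadrangle i. *)
have [lt_a _ _] := wf_graph_nth wfG lt_i.
have := leq_big_nat_term (fun j => (c (4 * j) && incident (e i).1 (e j)) +
  (c (4 * j + 1) && ((e j).1 == (e i).1)) + (c (4 * j + 3) && ((e j).2 == (e i).1))) lt_i.
by rewrite -deg_Hstep_old // pm_old //= c0 c1 /incident !eqxx.
Qed.

Lemma deg_Hstep_old_merge c v :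
  (forall i, i < m -> c (4 * i + 3) = c (4 * i + 1)) ->
  (forall i, i < m -> ~~ (c (4 * i) && c (4 * i + 1))) ->
  v < nv G -> deg (Hstep G) c v = deg G (fun i => c (4 * i) || c (4 * i + 1)) v.
Proof.
move=> c31 disj lt_v; rewrite deg_Hstep_old //; apply: eq_big_nat => i /andP[_ lt_i].
have [_ _ neq_ab] := wf_graph_nth wfG lt_i.
have : ~~ (((e i).1 == v) && ((e i).2 == v)).
  by apply: contra neq_ab => /andP[/eqP-> /eqP->].
rewrite c31 // /incident; move: (disj i lt_i).
by case: (c _) (c _) ((e i).1 == v) ((e i).2 == v) => [] [] [] [].
Qed.

Lemma perfect_HstepP c : perfect (Hstep G) c <->
  [/\ forall i, i < m -> c (4 * i + 2) = ~~ c (4 * i + 1) /\ c (4 * i + 3) = c (4 * i + 1),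
      forall i, i < m -> ~~ (c (4 * i) && c (4 * i + 1)) &
      perfect G (fun i => c (4 * i) || c (4 * i + 1))].
Proof.
rewrite perfect_Hstep_split; split=> [[pm_old pm_new] | [quad disj pm]].
  have quad i (lt_i : i < m) := (deg_Hstep_newP c lt_i).1 (pm_new i lt_i).
  have disj i (lt_i : i < m) := deg_Hstep_old_disjoint pm_old lt_i.
  split=> // v lt_v; rewrite -deg_Hstep_old_merge //; first exact: pm_old.
  by move=> i /quad[].
split=> [v lt_v | i lt_i]; last exact/deg_Hstep_newP/quad.
by rewrite deg_Hstep_old_merge //; [exact: pm | move=> i /quad[]].
Qed.

Definition marked_matchings : {set {set 'I_m} * {set 'I_m}} :=
  [set p : {set 'I_m} * {set 'I_m} | perfect_matching p.1 && (p.2 \subset p.1)].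

Definition lift_matching (p : {set 'I_m} * {set 'I_m}) : {set 'I_(size (edges (Hstep G)))} :=
  [set j : 'I_(size (edges (Hstep G))) | quad_lift (memn (p.1 :\: p.2)) (memn p.2) j].

Lemma memn_lift_matching p i k : i < m -> k < 4 ->
  memn (lift_matching p) (4 * i + k) =
  nth false [:: memn (p.1 :\: p.2) i; memn p.2 i; ~~ memn p.2 i; memn p.2 i] k.
Proof.
move=> lt_i lt_k; rewrite memn_set size_Hstep quad_liftE //.
by have -> : 4 * i + k < 4 * m by lia.
Qed.

Lemma memn_lift_matching0 p i : i < m ->
  memn (lift_matching p) (4 * i) = memn (p.1 :\: p.2) i.
Proof. by move=> lt_i; have := memn_lift_matching p (k := 0) lt_i isT; rewrite addn0. Qed.

Lemma lift_matching_perfect p :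
  p \in marked_matchings -> perfect_matching (lift_matching p).
Proof.
case: p => M B; rewrite inE /= => /andP[/perfect_matchingP pmM sBM].
apply/perfect_matchingP/perfect_HstepP; split.
- by move=> i lt_i; rewrite !memn_lift_matching.
- move=> i lt_i; rewrite memn_lift_matching0 // memn_lift_matching // memnD.
  by case: (memn B i); rewrite ?andbF.
- apply: eq_perfect pmM => j lt_j; rewrite memn_lift_matching0 // memn_lift_matching //= memnD.
  by case Bj: (memn B j); rewrite ?orbT ?andbT ?orbF // (memn_subset sBM Bj).
Qed.

Lemma perfect_matching_lift M' : perfect_matching M' ->
  exists2 p, p \in marked_matchings & M' = lift_matching p.
Proof.
move=> /perfect_matchingP/perfect_HstepP[quad disj pm].
pose A := [set x : 'I_m | memn M' (4 * x)].
pose B := [set x : 'I_m | memn M' (4 * x + 1)].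
have memnA i : memn A i = (i < m) && memn M' (4 * i).
  exact: (memn_set _ (fun i => memn M' (4 * i))).
have memnB i : memn B i = (i < m) && memn M' (4 * i + 1).
  exact: (memn_set _ (fun i => memn M' (4 * i + 1))).
exists (A :|: B, B).
  rewrite inE /= finset.subsetUr andbT; apply/perfect_matchingP; apply: eq_perfect pm => j lt_j.
  by rewrite memnU memnA memnB lt_j.
apply: memn_inj => j lt_j.
have /block4P[i [k [lt_i lt_k ->]]] : j < 4 * m by rewrite -size_Hstep.
rewrite memn_lift_matching //= memnD memnU memnA memnB lt_i /=.
have [quad2 quad3] := quad i lt_i; move: (disj i lt_i).
case: k lt_k => [|[|[|[|]]]] //= _; rewrite ?addn0 ?quad2 ?quad3.
by case: (memn M' (4 * i)) (memn M' (4 * i + 1)) => [] [].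
Qed.

Lemma lift_matching_inj : {in marked_matchings &, injective lift_matching}.
Proof.
move=> [M1 B1] [M2 B2]; rewrite !inE /= => /andP[_ sBM1] /andP[_ sBM2] eq_lift.
have eqB : B1 = B2.
  apply: memn_inj => i lt_i.
  have := memn_lift_matching (M1, B1) (k := 1) lt_i isT.
  by rewrite eq_lift memn_lift_matching.
have eqMB : M1 :\: B1 = M2 :\: B2.
  apply: memn_inj => i lt_i.
  by have := memn_lift_matching0 (M1, B1) lt_i; rewrite eq_lift memn_lift_matching0.
have setUDK (B M : {set 'I_m}) : B \subset M -> B :|: M :\: B = M.
  move=> sBM; apply/setP => x; rewrite !inE.
  by case Bx: (x \in B) => //=; rewrite (fintype.subsetP sBM x Bx).
by rewrite -eqB -(setUDK _ _ sBM1) -(setUDK _ _ sBM2) eqMB eqB.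
Qed.

Lemma card_marked_matchings : #|marked_matchings| = psi G * 2 ^ (nv G %/ 2).
Proof.
rewrite -sum1dep_card -(pair_big_dep (fun M => perfect_matching M)
  (fun M B : {set 'I_m} => B \subset M) (fun _ _ => 1)) /=.
rewrite (eq_bigr (fun _ => 2 ^ (nv G %/ 2) * 1)).
  by rewrite -big_distrr /= sum1dep_card mulnC.
move=> M /perfect_matchingP pmM; rewrite muln1 sum1dep_card -/(powerset M) card_powerset.
by rewrite -(handshake_perfect wfG pmM) -card_memn mulKn.
Qed.

Theorem psi_Hstep : psi (Hstep G) = psi G * 2 ^ (nv G %/ 2).
Proof.
rewrite [LHS]/psi; have -> : [set M' | perfect_matching M'] = lift_matching @: marked_matchings.
  apply/setP => M'; rewrite inE; apply/idP/imsetP => [/perfect_matching_lift | [p Dp ->]].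
    by case=> p Dp ->; exists p.
  exact: lift_matching_perfect.
by rewrite card_in_imset ?card_marked_matchings //; exact: lift_matching_inj.
Qed.

End Subdivision.

Lemma psi_C4 : psi C4 = 2.
Proof.
have degE c v : deg C4 c v = c 0 && incident v (0, 1) + c 1 && incident v (1, 2) +
                             c 2 && incident v (2, 3) + c 3 && incident v (3, 0).
  by rewrite /deg /= !big_nat_recr //= big_geq.
pose alt (b : bool) : {set 'I_(size (edges C4))} := [set x : 'I_4 | odd x != b].
have memn_alt b j : memn (alt b) j = (j < 4) && (odd j != b).
  exact: (memn_set _ (fun j => odd j != b)).
rewrite /psi; have -> : [set M | perfect_matching M] = alt @: [set: bool].
  apply/setP => M; rewrite inE; apply/idP/imsetP => [/perfect_matchingP pm | [b _ ->]].
    exists (memn M 0) => //; apply: memn_inj => j lt_j; rewrite memn_alt lt_j.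
    have := pm 0 isT; have := pm 1 isT; have := pm 2 isT; have := pm 3 isT.
    rewrite !degE /incident /=.
    by case: j lt_j => [|[|[|[|]]]] //= _;
      case: (memn M 0); case: (memn M 1); case: (memn M 2); case: (memn M 3).
  apply/perfect_matchingP => v lt_v; rewrite degE !memn_alt /incident /=.
  by case: v lt_v => [|[|[|[|]]]] //; case: b.
rewrite card_imset ?cardsT ?card_bool // => b1 b2 eq_alt.
by have := memn_alt b1 0; rewrite eq_alt memn_alt; case: b1 b2 {eq_alt} => [] [].
Qed.

Lemma H_succ g : 0 < g -> H g.+1 = Hstep (H g).
Proof. by case: g => // g _; rewrite /H iterS. Qed.

Lemma H_shape g : 0 < g ->
  [/\ wf_graph (H g), size (edges (H g)) = 4 ^ g & 3 * nv (H g) = 2 * 4 ^ g + 4].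
Proof.
elim: g => // -[_ _ | g IHg _]; first by [].
have [wfH sizeH nvH] := IHg isT; rewrite H_succ //; split.
- exact: wf_Hstep.
- by rewrite size_Hstep sizeH [RHS]expnS.
- by rewrite /= sizeH [4 ^ g.+2]expnS; lia.
Qed.

Lemma psi_H g : 0 < g -> exists2 s, psi (H g) = 2 ^ s & 9 * s + 1 = 4 ^ g + 6 * g.
Proof.
elim: g => // -[_ _ | g IHg _]; first by exists 1; rewrite // psi_C4.
have [s psiH sE] := IHg isT; have [wfH _ nvH] := H_shape (ltn0Sn g).
exists (s + nv (H g.+1) %/ 2); first by rewrite H_succ // psi_Hstep // psiH expnD.
by rewrite [4 ^ g.+2]expnS; move: (4 ^ g.+1) (nv (H g.+1)) sE nvH => X n; lia.
Qed.

Import Order.TTheory GRing.Theory Num.Theory.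
Import numFieldNormedType.Exports.
Local Open Scope classical_set_scope.
Local Open Scope ring_scope.

Section Asymptotics.

Variable R : realType.

Lemma psi_H_real g : (0 < g)%N ->
  exists2 s : nat, (psi (H g))%:R = 2 ^+ s :> R & 9 * s%:R = (4 ^ g)%:R + 6 * g%:R - 1 :> R.
Proof.
move=> g_gt0; have [s psiH sE] := psi_H g_gt0; exists s; first by rewrite psiH natrX.
by move/(congr1 (fun n : nat => n%:R : R)): sE; rewrite natrD natrM natrD natrM; lra.
Qed.

Lemma nv_H_real g : (0 < g)%N -> 3 * (nv (H g))%:R = 2 * (4 ^ g)%:R + 4 :> R.
Proof. by move=> /H_shape[_ _ nvH]; rewrite -!natrM -natrD nvH. Qed.

Lemma psi_H_powR g : (0 < g)%N ->
  (psi (H g))%:R = (2 : R) `^ ((4 ^ g)%:R / 9 + 2 / 3 * g%:R - 1 / 9).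
Proof.
move=> /psi_H_real[s -> sE]; rewrite -powR_mulrn //; congr (_ `^ _); lra.
Qed.

Lemma entropy_H g : (0 < g)%N ->
  ln (psi (H g))%:R / ((nv (H g))%:R / 2) =
  ln 2 / 3 * (1 + (6 * g%:R - 3) / ((4 ^ g)%:R + 2)) :> R.
Proof.
move=> g_gt0; have [s -> sE] := psi_H_real g_gt0; have nvH := nv_H_real g_gt0.
have pow4_gt0 : 0 < (4 ^ g)%:R + 2 :> R by rewrite ltr_wpDl.
rewrite lnXn // -[ln 2 *+ s]mulr_natr.
have -> : s%:R = ((4 ^ g)%:R + 6 * g%:R - 1) / 9 :> R by lra.
have -> : (nv (H g))%:R = (2 * (4 ^ g)%:R + 4) / 3 :> R by lra.
by field; apply/andP; split; apply/eqP; lra.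
Qed.

Lemma cvg_lin_over_pow4 :
  (fun g => (6 * g%:R - 3) / ((4 ^ g)%:R + 2)) @ \oo --> (0 : R).
Proof.
rewrite -cvg_shiftS /=.
have six_harmonic : (fun n => 6 * harmonic n) @ \oo --> (0 : R).
  by rewrite -(mulr0 6); exact: cvgMl_tmp cvg_harmonic.
apply: (squeeze_cvgr _ (cvg_cst 0) six_harmonic); apply: nearW => n.
have pow4_gt0 : 0 < (4 ^ n.+1)%:R + 2 :> R by rewrite ltr_wpDl.
have sq_le_pow4 : n.+1%:R ^+ 2 <= (4 ^ n.+1)%:R :> R.
  rewrite -natrX ler_nat -(expnM 2 2) mulnC expnM leq_exp2r //.
  exact/ltnW/ltn_expl.
rewrite /harmonic /= -[n.+1%:R]natr1 in sq_le_pow4 *.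
apply/andP; split; first by rewrite divr_ge0 // ?ler0n; lra.
have n_ge0 : 0 <= n%:R :> R := ler0n _ _.
rewrite ler_pdivrMr // mulrAC ler_pdivlMr ?ltr_wpDl //; nra.
Qed.

End Asymptotics.

Theorem theorem4 (R : realType) :
  (forall g : nat, (1 <= g)%N ->
     (psi (H g))%:R =
       (2 : R) `^ ((4 ^ g)%:R / 9 + 2 / 3 * g%:R - 1 / 9)
     /\ (nv (H g))%:R = 2 / 3 * ((4 ^ g)%:R + 2 : R))
  /\
  (fun g : nat => ln ((psi (H g))%:R : R) / ((nv (H g))%:R / 2))
     @ \oo --> ln 2 / 3.
Proof.
split=> [g g_gt0 | ].
  by split; [exact: psi_H_powR | have := nv_H_real R g_gt0; lra].
rewrite -cvg_shiftS /=; under eq_fun do rewrite entropy_H //.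
have cvg_rest : (fun n => (6 * n.+1%:R - 3) / ((4 ^ n.+1)%:R + 2)) @ \oo --> (0 : R).
  rewrite (cvg_shiftS (fun n => (6 * n%:R - 3) / ((4 ^ n)%:R + 2) : R)).
  exact: cvg_lin_over_pow4.
by have := cvgMl_tmp (a := ln 2 / 3) (cvgD (cvg_cst (1 : R)) cvg_rest); rewrite addr0 mulr1; apply.
Qed.
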